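(* Under assumptions (A1)–(A6), for (almost) every $x$ such that $P(Y(1)=1,M(1)=0\mid X=x)>0$, $$\zeta'(x)=1-\frac{\mu_{00}(x)}{\mu_{10}(x)},\qquad \delta'(x)=\zeta'(x),\qquad \psi'(x)=0.$$
   Context: Observed data $O=(X,A,M,Y)$ with covariates $X\in\mathbb{R}^d$, binary exposure $A$, binary mediator $M$, binary outcome $Y$. For $a,m\in\{0,1\}$, $Y(a,m)$ is the potential outcome under $A=a,M=m$, $M(a)$ the potential mediator, $Y(a):=Y(a,M(a))$, cross-world $Y(a,M(a'))$ by substitution, all on a common probability space with $O$. $\mu_{am}(x)=P(Y=1\mid A=a,M=m,X=x)$. Define $\delta'(x)=P(Y(0)=0\mid Y(1,M(1))=1,M(1)=0,X=x)$, $\psi'(x)=P(Y(1,M(0))=0,\,Y(0,M(0))=0\mid Y(1,M(1))=1,M(1)=0,X=x)$, $\zeta'(x)=P(Y(1,M(0))=1,\,Y(0,M(0))=0\mid Y(1,M(1))=1,M(1)=0,X=x)$. Assumptions: (A1) $A=a,M=m\Rightarrow Y=Y(a,m)$ and $A=a\Rightarrow M=M(a)$. (A2) $Y(1,1)\ge Y(1,0)\ge Y(0,0)$, $Y(1,1)\ge Y(0,1)$, $M(1)\ge M(0)$. (A3) $A\perp\{Y(1,1),Y(1,0),Y(0,1),Y(0,0),M(1),M(0)\}\mid X$. (A4) $\{Y(1,1),Y(1,0),Y(0,1),Y(0,0)\}\perp\{M(1),M(0)\}\mid X$. (A5) for some $\epsilon>0$, $P\{\min_{a,m}P(A=a,M=m\mid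 X)\ge\epsilon\}=1$. (A6) $P\{P(Y=1\mid A=1,M=1,X)\ge\epsilon\}=1$. *)

From HB Require Import structures.
From mathcomp Require Import all_boot all_order all_algebra.
From mathcomp Require Import all_classical all_reals all_analysis.
Set Implicit Arguments. Unset Strict Implicit. Unset Printing Implicit Defensive.
Import Order.TTheory GRing.Theory Num.Theory.
Local Open Scope classical_set_scope.
Local Open Scope ring_scope.

(* The joint value ("profile") of all the binary variables of a unit:
   observed A, M, Y and the potential mediators M(0), M(1) and potential
   outcomes Y(0,0), Y(0,1), Y(1,0), Y(1,1). *)
Record profile := Profile {
  pA : bool; pM : bool; pY : bool;
  pM0 : bool; pM1 : bool;
  pY00 : bool; pY01 : bool; pY10 : bool; pY11 : bool }.

Definition profile_enc (u : profile) :=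
  (pA u, pM u, pY u, pM0 u, pM1 u, pY00 u, pY01 u, pY10 u, pY11 u).
Definition profile_dec
  (t : bool * bool * bool * bool * bool * bool * bool * bool * bool) : profile :=
  let: (a, m, y, m0, m1, y00, y01, y10, y11) := t in
  Profile a m y m0 m1 y00 y01 y10 y11.
Lemma profile_encK : cancel profile_enc profile_dec. Proof. by case. Qed.
HB.instance Definition _ := Finite.copy profile (can_type profile_encK).

(* M(a) and Y(a,m) read off a profile; cross-world Y(a, M(a')) by substitution *)
Definition pMa (u : profile) (a : bool) : bool := if a then pM1 u else pM0 u.
Definition pYam (u : profile) (a m : bool) : bool :=
  match a, m with
  | false, false => pY00 u | false, true => pY01 u
  | true, false => pY10 u | true, true => pY11 u end.
Definition pYc (u : profile) (a a' : bool) : bool := pYam u a (pMa u a').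

Definition profile_of {Omega : Type} (A M Y : Omega -> bool)
  (Mp : bool -> Omega -> bool) (Yp : bool -> bool -> Omega -> bool)
  (w : Omega) : profile :=
  Profile (A w) (M w) (Y w) (Mp false w) (Mp true w)
    (Yp false false w) (Yp false true w) (Yp true false w) (Yp true true w).

Section condprob.
Context {R : realType} {T : Type}.
Definition cp (kappa : T -> profile -> R) (x : T) (p : pred profile) : R :=
  \sum_(u | p u) kappa x u.
Definition ccp (kappa : T -> profile -> R) (x : T) (p q : pred profile) : R :=
  cp kappa x [pred u | p u && q u] / cp kappa x q.
End condprob.

Section cond.
Context {R : realType} {d dT : measure_display} {Omega : measurableType d}
  {T : measurableType dT}.

(* kappa is a regular conditional distribution of the (finite-valued) random
   variable V given X:  kappa x u = P(V = u | X = x). *)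
Definition is_rcd (P : probability Omega R) (X : Omega -> T)
  (V : Omega -> profile) (kappa : T -> profile -> R) : Prop :=
  [/\ (forall x u, 0 <= kappa x u),
      (forall x, \sum_(u : profile) kappa x u = 1),
      (forall u, measurable_fun setT (fun x => kappa x u)) &
      (forall u (B : set T), measurable B ->
         P (X @^-1` B `&` V @^-1` [set u]) =
         (\int[P]_(w in X @^-1` B) (kappa (X w) u)%:E)%E)].


Definition cond_indep (P : probability Omega R) (X : Omega -> T)
  (kappa : T -> profile -> R) (T1 T2 : eqType)
  (f : profile -> T1) (g : profile -> T2) : Prop :=
  {ae P, forall w, forall (a : T1) (b : T2),
     cp kappa (X w) [pred u | (f u == a) && (g u == b)] =
     cp kappa (X w) [pred u | f u == a] * cp kappa (X w) [pred u | g u == b]}.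
End cond.

Definition ev_cond : pred profile := [pred u | pYc u true true && ~~ pMa u true].

Section quantities.
Context {R : realType} {T : Type} (kappa : T -> profile -> R).
Definition mu (a m : bool) (x : T) : R :=
  ccp kappa x [pred u | pY u] [pred u | (pA u == a) && (pM u == m)].
(* delta'(x) = P(Y(0) = 0 | Y(1,M(1)) = 1, M(1) = 0, X = x), Y(0) = Y(0,M(0)) *)
Definition delta' (x : T) : R :=
  ccp kappa x [pred u | ~~ pYc u false false] ev_cond.
Definition psi' (x : T) : R :=
  ccp kappa x [pred u | ~~ pYc u true false && ~~ pYc u false false] ev_cond.
Definition zeta' (x : T) : R :=
  ccp kappa x [pred u | pYc u true false && ~~ pYc u false false] ev_cond.
End quantities.

From HB Require Import structures.
From mathcomp Require Import all_boot all_order all_algebra.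
From mathcomp Require Import all_classical all_reals all_analysis.
From mathcomp Require Import measurable_realfun ring.
Import Order.TTheory GRing.Theory Num.Theory.
Local Open Scope classical_set_scope.
Local Open Scope ring_scope.

(* By (A1) and (A2) the conditional law of the profile charges a.e. only
   admissible profiles, on which {Y(1,M(1)) = 1, M(1) = 0} is the event
   {Y(1,0) = 1, M(1) = 0} and forces M(0) = 0.  Hence psi' = 0 and delta' and
   zeta' both equal P(Y(1,0) = 1, Y(0,0) = 0, M(1) = 0 | X) divided by
   P(Y(1,0) = 1, M(1) = 0 | X).  By (A4) the factor P(M(1) = 0 | X) cancels,
   and monotonicity turns the numerator into
   P(Y(1,0) = 1 | X) - P(Y(0,0) = 1 | X).  Finally (A3), (A4) and positivity
   identify mu_am(x) with P(Y(a,m) = 1 | X = x). *)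

Definition admissible (u : profile) : bool :=
  [&& pY u == pYam u (pA u) (pM u), pM u == pMa u (pA u),
      (pY10 u <= pY11 u)%N, (pY00 u <= pY10 u)%N, (pY01 u <= pY11 u)%N &
      (pM0 u <= pM1 u)%N].

Lemma admissible_A_M (u : profile) (a m : bool) : admissible u ->
  (pA u == a) && (pM u == m) = (pA u == a) && (pMa u a == m).
Proof. by case/andP => _ /and5P[/eqP-> _ _ _ _]; case: eqP => [->|]. Qed.

Lemma admissible_Y_A_M (u : profile) (a m : bool) : admissible u ->
  pY u && ((pA u == a) && (pM u == m)) =
  (pA u == a) && (pYam u a m && (pMa u a == m)).
Proof.
case/andP => /eqP-> /and5P[/eqP-> _ _ _ _].
by case: eqP => [->|]; rewrite ?andbF //; case: eqP => [->|]; rewrite ?andbF.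
Qed.

Lemma admissible_profile_of {Omega : Type} {A M Y : Omega -> bool}
    {Mp : bool -> Omega -> bool} {Yp : bool -> bool -> Omega -> bool} :
  (forall w a m, A w = a -> M w = m -> Y w = Yp a m w) ->
  (forall w a, A w = a -> M w = Mp a w) ->
  (forall w, [/\ (Yp true false w <= Yp true true w)%N,
                 (Yp false false w <= Yp true false w)%N,
                 (Yp false true w <= Yp true true w)%N &
                 (Mp false w <= Mp true w)%N]) ->
  forall w, admissible (profile_of A M Y Mp Yp w).
Proof.
move=> consY consM mono w; rewrite /admissible /=.
case: (mono w) => -> -> -> ->; rewrite !andbT.
have := consY w (A w) (M w) erefl erefl; have := consM w (A w) erefl.
by case: (A w) => /= -> ->; case: (Mp _ w); rewrite /= !eqxx.
Qed.

Lemma rcd_vanishes_off {R : realType} {d dT : measure_display}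
    {Omega : measurableType d} {T : measurableType dT} {P : probability Omega R}
    {X : Omega -> T} {V : Omega -> profile} {kappa : T -> profile -> R}
    {G : pred profile} :
  measurable_fun setT X -> is_rcd P X V kappa -> (forall w, G (V w)) ->
  {ae P, forall w u, ~~ G u -> kappa (X w) u = 0}.
Proof.
move=> mX [kappa_ge0 _ kappa_meas kappa_law] GV.
apply: filter_forall => u; have [Gu|nGu] := boolP (G u); first exact: aeW.
have mkappa : measurable_fun setT (EFin \o (fun w => kappa (X w) u)).
  by apply/measurable_EFinP; exact: measurableT_comp (kappa_meas u) mX.
have Vu0 : V @^-1` [set u] = set0.
  by apply/seteqP; split => // w /= Vw; move: (GV w); rewrite Vw (negbTE nGu).
have int0 : (\int[P]_(w in setT) `|(kappa (X w) u)%:E| = 0)%E.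
  have := kappa_law u setT measurableT.
  rewrite preimage_setT setTI Vu0 measure0 => ->.
  by apply: eq_integral => w _; rewrite gee0_abs // lee_fin.
move/(ae_eq_integral_abs _ measurableT mkappa): int0.
by apply: filterS => w /(_ I) [].
Qed.

Ltac case_profile := move=> [[] [] [] [] [] [] [] [] []] //=.

Section support.
Context {R : realType} {T : Type} {kappa : T -> profile -> R} {x : T}
  {G : pred profile}.
Hypothesis kappa_off : forall u, ~~ G u -> kappa x u = 0.
Local Notation Pr := (cp kappa x).

Lemma cp_eq_on (p q : pred profile) :
  (forall u, G u -> p u = q u) -> Pr p = Pr q.
Proof.
move=> pq; rewrite /cp [LHS]big_mkcond [RHS]big_mkcond; apply: eq_bigr => u _.
by have [/pq->|/kappa_off->] := boolP (G u); rewrite ?if_same.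
Qed.

Lemma cp_predD (p q : pred profile) : (forall u, G u -> q u -> p u) ->
  Pr [pred u | p u && ~~ q u] = Pr p - Pr q.
Proof.
move=> qp; rewrite [Pr p](bigID q) /= -/(Pr [pred u | p u && q u]).
rewrite (@cp_eq_on [pred u | p u && q u] q); last first.
  by move=> u /qp /=; case: (q u) => [/(_ isT)->|]; rewrite ?andbF.
by rewrite addrAC subrr add0r.
Qed.

Lemma cp_indep_on {T1 T2 : finType} {f : profile -> T1} {g : profile -> T2} :
  (forall a b, Pr [pred u | (f u == a) && (g u == b)] =
               Pr [pred u | f u == a] * Pr [pred u | g u == b]) ->
  forall (S1 : pred T1) (S2 : pred T2) (p p1 p2 : pred profile),
  (forall u, G u -> p u = S1 (f u) && S2 (g u)) ->
  (forall u, G u -> p1 u = S1 (f u)) ->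
  (forall u, G u -> p2 u = S2 (g u)) ->
  Pr p = Pr p1 * Pr p2.
Proof.
move=> fg S1 S2 p p1 p2 /cp_eq_on-> /cp_eq_on-> /cp_eq_on->.
have marg (T3 : finType) (h : profile -> T3) (S : pred T3) :
    Pr [pred u | S (h u)] = \sum_(a | S a) Pr [pred u | h u == a].
  rewrite /cp (partition_big h S) //; apply: eq_bigr => a Sa.
  by apply: eq_bigl => u /=; case: eqP => [->|]; rewrite ?andbF // Sa.
rewrite (marg _ f) (marg _ g) mulr_suml /cp (partition_big f S1) /=; last first.
  by move=> u /andP[].
apply: eq_bigr => a Sa; rewrite mulr_sumr (partition_big g S2) /=; last first.
  by move=> u /andP[/andP[]].
apply: eq_bigr => b Sb; rewrite -fg /cp; apply: eq_bigl => u /=.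
by case: (f u =P a) => [->|]; case: (g u =P b) => [->|]; rewrite ?Sa ?Sb ?andbF.
Qed.
End support.

Definition outcomes (u : profile) := (pY11 u, pY10 u, pY01 u, pY00 u).
Definition mediators (u : profile) := (pM1 u, pM0 u).

(* as a left-nested tuple, [potentials u] is [((outcomes u, pM1 u), pM0 u)] *)
Definition potentials (u : profile) :=
  (pY11 u, pY10 u, pY01 u, pY00 u, pM1 u, pM0 u).

Definition outcome_of (t : bool * bool * bool * bool) (a m : bool) : bool :=
  let: (y11, y10, y01, y00) := t in
  if a then (if m then y11 else y10) else (if m then y01 else y00).
Definition mediator_of (s : bool * bool) (a : bool) : bool :=
  let: (m1, m0) := s in if a then m1 else m0.

Section identification.
Context {R : realType} {T : Type} (kappa : T -> profile -> R) (x : T).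
Hypothesis kappa_off : forall u, ~~ admissible u -> kappa x u = 0.
Local Notation Pr := (cp kappa x).

Lemma psi'_eq0 : psi' kappa x = 0.
Proof.
rewrite /psi' /ccp (cp_eq_on kappa_off _ [pred u | false]).
  by rewrite /cp big_pred0 // mul0r.
by case_profile.
Qed.

Lemma delta'_eq_zeta' : delta' kappa x = zeta' kappa x.
Proof.
rewrite /delta' /zeta' /ccp; congr (_ / _).
by apply: (cp_eq_on kappa_off); case_profile.
Qed.

Hypothesis indep_A :
  forall (a : bool) (b : bool * bool * bool * bool * bool * bool),
  Pr [pred u | (pA u == a) && (potentials u == b)] =
  Pr [pred u | pA u == a] * Pr [pred u | potentials u == b].
Hypothesis indep_M :
  forall (a : bool * bool * bool * bool) (b : bool * bool),
  Pr [pred u | (outcomes u == a) && (mediators u == b)] =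
  Pr [pred u | outcomes u == a] * Pr [pred u | mediators u == b].

Let indep_A_on := cp_indep_on kappa_off indep_A.
Let indep_M_on := cp_indep_on kappa_off indep_M.

Lemma cp_A_M_factor (a m : bool) :
  Pr [pred u | (pA u == a) && (pM u == m)] =
  Pr [pred u | pA u == a] * Pr [pred u | pMa u a == m].
Proof.
apply: (indep_A_on (pred1 a) (fun t => mediator_of (t.1.2, t.2) a == m)).
- by move=> u adm /=; rewrite admissible_A_M //; case: a.
- by [].
- by move=> u _; case: a.
Qed.

Lemma cp_Y_A_M_factor (a m : bool) :
  Pr [pred u | pY u && ((pA u == a) && (pM u == m))] =
  Pr [pred u | pA u == a] *
  (Pr [pred u | pYam u a m] * Pr [pred u | pMa u a == m]).
Proof.
transitivity
  (Pr [pred u | pA u == a] * Pr [pred u | pYam u a m && (pMa u a == m)]).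
  apply: (indep_A_on (pred1 a)
    (fun t => outcome_of t.1.1 a m && (mediator_of (t.1.2, t.2) a == m))).
  - by move=> u adm /=; rewrite admissible_Y_A_M //; case: a; case: m.
  - by [].
  - by move=> u _; case: a; case: m.
congr (_ * _).
apply: (indep_M_on (fun t => outcome_of t a m) (fun s => mediator_of s a == m)).
all: by move=> u _; case: a; case: m.
Qed.

Lemma mu_identified (a m : bool) :
  Pr [pred u | (pA u == a) && (pM u == m)] != 0 ->
  mu kappa a m x = Pr [pred u | pYam u a m].
Proof.
by rewrite /mu /ccp cp_Y_A_M_factor cp_A_M_factor => nz0; rewrite mulrCA mulfK.
Qed.

Lemma cp_ev_cond_factor :
  Pr ev_cond = Pr [pred u | pY10 u] * Pr [pred u | ~~ pM1 u].
Proof.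
by apply: (indep_M_on (fun t => t.1.1.2) (fun s => ~~ s.1)); case_profile.
Qed.

Lemma cp_zeta'_num_factor :
  Pr [pred u | (pYc u true false && ~~ pYc u false false) && ev_cond u] =
  Pr [pred u | pY10 u && ~~ pY00 u] * Pr [pred u | ~~ pM1 u].
Proof.
apply: (indep_M_on (fun t => t.1.1.2 && ~~ t.2) (fun s => ~~ s.1)).
all: by case_profile.
Qed.

Lemma zeta'_identified :
  0 < Pr ev_cond ->
  (forall a, Pr [pred u | (pA u == a) && (pM u == false)] != 0) ->
  zeta' kappa x = 1 - mu kappa false false x / mu kappa true false x.
Proof.
rewrite cp_ev_cond_factor => /gt_eqF/negbT; rewrite mulf_eq0 negb_or.
case/andP => Y10_neq0 M1_neq0 nz0.
rewrite !mu_identified //= /zeta' /ccp cp_ev_cond_factor cp_zeta'_num_factor.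
rewrite (cp_predD kappa_off); last by case_profile.
by field; apply/andP.
Qed.
End identification.

Theorem proposition11 (R : realType) (d : measure_display)
  (Omega : measurableType d) (P : probability Omega R) (k : nat)
  (X : Omega -> k.-tuple R) (A M Y : Omega -> bool)
  (Mp : bool -> Omega -> bool) (Yp : bool -> bool -> Omega -> bool)
  (kappa : k.-tuple R -> profile -> R)
  (mX : measurable_fun setT X) (mA : measurable_fun setT A)
  (mM : measurable_fun setT M) (mY : measurable_fun setT Y)
  (mMp : forall a, measurable_fun setT (Mp a))
  (mYp : forall a m, measurable_fun setT (Yp a m))
  (Hkappa : is_rcd P X (profile_of A M Y Mp Yp) kappa)
  (* (A1) consistency *)
  (HA1Y : forall w a m, A w = a -> M w = m -> Y w = Yp a m w)
  (HA1M : forall w a, A w = a -> M w = Mp a w)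
  (* (A2) monotonicity *)
  (HA2 : forall w, [/\ (Yp true false w <= Yp true true w)%N,
                       (Yp false false w <= Yp true false w)%N,
                       (Yp false true w <= Yp true true w)%N &
                       (Mp false w <= Mp true w)%N])
  (* (A3) A independent of all potential outcomes/mediators given X *)
  (HA3 : cond_indep P X kappa pA
           (fun u => (pY11 u, pY10 u, pY01 u, pY00 u, pM1 u, pM0 u)))
  (* (A4) potential outcomes independent of potential mediators given X *)
  (HA4 : cond_indep P X kappa
           (fun u => (pY11 u, pY10 u, pY01 u, pY00 u))
           (fun u => (pM1 u, pM0 u)))
  (* (A5), (A6) positivity *)
  (HA56 : exists eps : R, 0 < eps /\
     {ae P, forall w,
       (forall a m, eps <= cp kappa (X w) [pred u | (pA u == a) && (pM u == m)])
       /\ eps <= mu kappa true true (X w)}) :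
  {ae P, forall w, 0 < cp kappa (X w) ev_cond ->
     [/\ zeta' kappa (X w) = 1 - mu kappa false false (X w) / mu kappa true false (X w),
         delta' kappa (X w) = zeta' kappa (X w) &
         psi' kappa (X w) = 0]}.
Proof.
have off := rcd_vanishes_off mX Hkappa (admissible_profile_of HA1Y HA1M HA2).
case: HA56 => eps [eps_gt0 positivity].
apply: filter_app off; apply: filter_app HA3; apply: filter_app HA4.
apply: filterS positivity => w [pos _] indep_M indep_A off ev_gt0.
split; [|exact: delta'_eq_zeta' | exact: psi'_eq0].
apply: zeta'_identified => // a.
by rewrite gt_eqF // (lt_le_trans eps_gt0 (pos a false)).
Qed.
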